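(* Let $K$ be a compact convex semigroup and let $e \in K$ be a minimal idempotent of $K$. Then $exe=e$ for every $x \in K$.
   Context: A compact convex semigroup is a non-empty compact convex subset $K$ of some locally convex topological vector space, equipped with an associative binary operation $(a,b)\mapsto ab$ on $K$ such that for every fixed $b\in K$ the map $K\ni a\mapsto ab\in K$ is affine and continuous (no continuity or affineness in the second variable is assumed). An element $e\in K$ is idempotent if $ee=e$. On idempotents one defines $e<f$ if and only if $ef=fe=e$; an idempotent $e$ is minimal if there is no idempotent $f\neq e$ with $f<e$. *)

(* real locally convex (Hausdorff) topological vector spaces,
   presented by a separating family of seminorms. *)
From Stdlib Require Import Reals List.
Open Scope R_scope.

Record LCTVS := {
  vcar :> Type;
  vzero : vcar;
  vadd : vcar -> vcar -> vcar;
  vopp : vcar -> vcar;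
  vscal : R -> vcar -> vcar;
  vaddA : forall x y z, vadd x (vadd y z) = vadd (vadd x y) z;
  vaddC : forall x y, vadd x y = vadd y x;
  vadd0 : forall x, vadd x vzero = x;
  vaddN : forall x, vadd x (vopp x) = vzero;
  vscalA : forall a b x, vscal a (vscal b x) = vscal (a * b) x;
  vscal1 : forall x, vscal 1 x = x;
  vscalDr : forall a x y, vscal a (vadd x y) = vadd (vscal a x) (vscal a y);
  vscalDl : forall a b x, vscal (a + b) x = vadd (vscal a x) (vscal b x);
  sidx : Type;
  snorm : sidx -> vcar -> R;
  snorm_ge0 : forall i x, 0 <= snorm i x;
  snorm_triangle : forall i x y, snorm i (vadd x y) <= snorm i x + snorm i y;
  snorm_hom : forall i a x, snorm i (vscal a x) = Rabs a * snorm i x;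
  snorm_sep : forall x, (forall i, snorm i x = 0) -> x = vzero
}.

Section Topology.
Variable E : LCTVS.

Definition vsub (x y : E) : E := vadd E x (vopp E y).

Definition ball (x : E) (F : list (sidx E)) (eps : R) (y : E) : Prop :=
  forall i, In i F -> snorm E i (vsub y x) < eps.

Definition is_open (U : E -> Prop) : Prop :=
  forall x, U x -> exists (F : list (sidx E)) (eps : R),
    0 < eps /\ forall y, ball x F eps y -> U y.

Definition is_compact (K : E -> Prop) : Prop :=
  forall (J : Type) (U : J -> E -> Prop),
    (forall j, is_open (U j)) ->
    (forall x, K x -> exists j, U j x) ->
    exists l : list J, forall x, K x -> exists j, In j l /\ U j x.

Definition cvx (t : R) (x y : E) : E := vadd E (vscal E t x) (vscal E (1 - t) y).

Definition is_convex (K : E -> Prop) : Prop :=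
  forall x y t, K x -> K y -> 0 <= t <= 1 -> K (cvx t x y).

Definition affine_on (K : E -> Prop) (f : E -> E) : Prop :=
  forall x y t, K x -> K y -> 0 <= t <= 1 -> f (cvx t x y) = cvx t (f x) (f y).

Definition continuous_on (K : E -> Prop) (f : E -> E) : Prop :=
  forall x, K x -> forall W, is_open W -> W (f x) ->
    exists U, is_open U /\ U x /\ forall y, K y -> U y -> W (f y).

Definition compact_convex_semigroup (K : E -> Prop) (mul : E -> E -> E) : Prop :=
  (exists x, K x) /\ is_convex K /\ is_compact K /\
  (forall a b, K a -> K b -> K (mul a b)) /\
  (forall a b c, K a -> K b -> K c -> mul (mul a b) c = mul a (mul b c)) /\
  (forall b, K b -> affine_on K (fun a => mul a b) /\
                    continuous_on K (fun a => mul a b)).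

Definition idempotent (mul : E -> E -> E) (e : E) : Prop := mul e e = e.

Definition idem_lt (mul : E -> E -> E) (e f : E) : Prop :=
  mul e f = e /\ mul f e = e.

Definition minimal_idempotent (K : E -> Prop) (mul : E -> E -> E) (e : E) : Prop :=
  K e /\ idempotent mul e /\
  ~ (exists f, K f /\ idempotent mul f /\ f <> e /\ idem_lt mul f e).

End Topology.

(* Let z = e x e.  Right multiplication by z is a continuous affine self-map
   of the compact convex set K, so it has a fixed point a (a Markov–Kakutani
   type theorem, proved with Cesàro averages of an orbit and a compactness
   argument).  Then w = e a satisfies w e = w and w z = w.  The left ideal
   K w is a closed subsemigroup, so it contains an idempotent f (the
   Ellis–Numakura lemma, proved with Zorn's lemma and Cantor's intersection
   theorem); e f is an idempotent below e, hence equal to e by minimality,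
   which writes e = v w.  Finally z = e z = v w z = v w = e. *)

From Stdlib Require Import Reals List Lra Classical.
From mathcomp Require boolp classical_sets.
Set Bullet Behavior "Strict Subproofs".
Open Scope R_scope.

Lemma list_pos_lower_bound {A : Type} (f : A -> R) (l : list A) :
  exists eps, 0 < eps /\ forall a, In a l -> 0 < f a -> eps <= f a.
Proof.
  induction l as [|a l [eps [Heps Hl]]]; [exists 1; split; [lra | intros _ []]|].
  destruct (Rlt_dec 0 (f a)) as [Ha|Ha].
  - exists (Rmin (f a) eps). split; [apply Rmin_pos; assumption|].
    intros b [<-|Hb] Hfb; [apply Rmin_l|].
    eapply Rle_trans; [apply Rmin_r | apply Hl; assumption].
  - exists eps. split; [exact Heps|]. intros b [<-|Hb] Hfb; [contradiction | auto].
Qed.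

Lemma list_upper_bound {A : Type} (f : A -> R) (l : list A) :
  exists M, forall a, In a l -> f a <= M.
Proof.
  induction l as [|a l [M HM]]; [exists 0; intros _ []|].
  exists (Rmax (f a) M). intros b [<-|Hb]; [apply Rmax_l|].
  eapply Rle_trans; [apply HM; exact Hb | apply Rmax_r].
Qed.

Lemma chain_list_min {X : Type} (Ch : X -> Prop) (le : X -> X -> Prop) :
  (forall a b, Ch a -> Ch b -> le a b \/ le b a) ->
  (forall a b c, le a b -> le b c -> le a c) ->
  forall (l : list X) (m0 : X), Ch m0 ->
  exists m, Ch m /\ forall s, In s l -> Ch s -> le m s.
Proof.
  intros Htot Htrans l m0 Hm0.
  induction l as [|s l [m [Hm Hml]]]; [exists m0; split; [exact Hm0 | intros _ []]|].
  destruct (classic (Ch s)) as [Hs|Hs].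
  - destruct (Htot m s Hm Hs) as [Hms|Hsm].
    + exists m. split; [exact Hm|]. intros t [<-|Ht] Hct; auto.
    + exists s. split; [exact Hs|]. intros t [<-|Ht] Hct.
      * destruct (Htot s s Hct Hct); assumption.
      * apply (Htrans _ m); auto.
  - exists m. split; [exact Hm|]. intros t [<-|Ht] Hct; [contradiction | auto].
Qed.

Lemma zorn_preorder {T : Type} (t0 : T) (le : T -> T -> Prop) :
  (forall t, le t t) -> (forall r s t, le r s -> le s t -> le r t) ->
  (forall A : T -> Prop, (forall s t, A s -> A t -> le s t \/ le t s) ->
     exists t, forall s, A s -> le s t) ->
  exists t, forall s, le t s -> le s t.
Proof.
  intros Hrefl Htrans Hchain.
  destruct (@classical_sets.ZL_preorder T t0 (fun s t => boolp.asbool (le s t))) as [t Ht].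
  - intro t; apply boolp.asboolT, Hrefl.
  - intros r s t Hrs Hst. apply boolp.asboolT.
    apply (Htrans r s t); apply boolp.asboolW; assumption.
  - intros A HA. destruct (Hchain A) as [t Ht].
    + intros s t As At. destruct (HA s t As At) as [H|H]; apply boolp.asboolW in H; auto.
    + exists t. intros s As. apply boolp.asboolT, Ht, As.
  - exists t. intros s Hts. apply boolp.asboolW, Ht, boolp.asboolT, Hts.
Qed.

Section VectorAlgebra.
Variable E : LCTVS.

Lemma vadd0l (x : E) : vadd E (vzero E) x = x.
Proof. rewrite vaddC; apply vadd0. Qed.

Lemma vaddNl (x : E) : vadd E (vopp E x) x = vzero E.
Proof. rewrite vaddC; apply vaddN. Qed.

Lemma vadd_cancel (a b c : E) : vadd E a b = vadd E a c -> b = c.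
Proof.
  intro H. rewrite <- (vadd0l b), <- (vadd0l c), <- (vaddNl a), <- !vaddA, H.
  reflexivity.
Qed.

Lemma vscal0 (x : E) : vscal E 0 x = vzero E.
Proof.
  apply (vadd_cancel (vscal E 0 x)). rewrite vadd0, <- vscalDl. f_equal. ring.
Qed.

Lemma vopp_scal (x : E) : vopp E x = vscal E (-1) x.
Proof.
  apply (vadd_cancel x). rewrite vaddN. rewrite <- (vscal1 E x) at 1.
  rewrite <- vscalDl. replace (1 + -1) with 0 by ring. symmetry; apply vscal0.
Qed.

Lemma vsub_diag (x : E) : vsub E x x = vzero E.
Proof. apply vaddN. Qed.

Lemma vsub_eq0 (x y : E) : vsub E x y = vzero E -> x = y.
Proof.
  unfold vsub; intro H. rewrite <- (vadd0 E x), <- (vaddNl y), vaddA, H. apply vadd0l.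
Qed.

Lemma vsub_addK (x y : E) : vadd E (vsub E x y) y = x.
Proof. unfold vsub. rewrite <- vaddA, vaddNl, vadd0. reflexivity. Qed.

Lemma vsub_split (x y z : E) : vsub E x z = vadd E (vsub E x y) (vsub E y z).
Proof.
  unfold vsub. rewrite vaddA. f_equal. rewrite <- vaddA, vaddNl, vadd0. reflexivity.
Qed.

Lemma vsub_addadd (a b c d : E) :
  vsub E (vadd E a b) (vadd E c d) = vadd E (vsub E a c) (vsub E b d).
Proof.
  unfold vsub. rewrite !vopp_scal, vscalDr, !vaddA. f_equal.
  rewrite <- !vaddA. f_equal. apply vaddC.
Qed.

Lemma vscal_sub t (x y : E) : vscal E t (vsub E x y) = vsub E (vscal E t x) (vscal E t y).
Proof.
  unfold vsub. rewrite vscalDr, !vopp_scal, !vscalA. do 2 f_equal. ring.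
Qed.

Lemma snorm_zero i : snorm E i (vzero E) = 0.
Proof. rewrite <- (vscal0 (vzero E)), snorm_hom, Rabs_R0. ring. Qed.

Lemma snorm_opp i (x : E) : snorm E i (vopp E x) = snorm E i x.
Proof.
  rewrite vopp_scal, snorm_hom, Rabs_left; [ring | lra].
Qed.

Lemma snorm_sub_sym i (x y : E) : snorm E i (vsub E x y) = snorm E i (vsub E y x).
Proof.
  rewrite <- (snorm_opp i (vsub E x y)). f_equal. unfold vsub.
  rewrite !vopp_scal, vscalDr, vscalA.
  replace (-1 * -1) with 1 by ring. rewrite vscal1, vaddC. reflexivity.
Qed.

Lemma snorm_tri i (x y z : E) :
  snorm E i (vsub E x z) <= snorm E i (vsub E x y) + snorm E i (vsub E y z).
Proof. rewrite (vsub_split x y z). apply snorm_triangle. Qed.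

Lemma snorm_le_sub i (x y : E) : snorm E i x <= snorm E i (vsub E x y) + snorm E i y.
Proof. rewrite <- (vsub_addK x y) at 1. apply snorm_triangle. Qed.

Lemma snorm_sub_le i (x y : E) : snorm E i (vsub E x y) <= snorm E i x + snorm E i y.
Proof. unfold vsub. rewrite <- (snorm_opp i y). apply snorm_triangle. Qed.

Lemma snorm_separates (x y : E) : x <> y -> exists i, 0 < snorm E i (vsub E x y).
Proof.
  intro Hxy. apply NNPP. intro Hn. apply Hxy, vsub_eq0, snorm_sep. intro i.
  destruct (snorm_ge0 E i (vsub E x y)) as [Hl|Hl]; [|auto].
  exfalso; apply Hn; exists i; exact Hl.
Qed.

End VectorAlgebra.

Section Topology.
Variable E : LCTVS.

Definition closed (A : E -> Prop) : Prop := is_open E (fun x => ~ A x).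

Lemma open_inter (U V : E -> Prop) :
  is_open E U -> is_open E V -> is_open E (fun x => U x /\ V x).
Proof.
  intros HU HV x [Ux Vx].
  destruct (HU x Ux) as [F1 [e1 [He1 H1]]], (HV x Vx) as [F2 [e2 [He2 H2]]].
  exists (F1 ++ F2), (Rmin e1 e2). split; [apply Rmin_pos; assumption|].
  intros y Hy. split; [apply H1 | apply H2]; intros i Hi;
    (eapply Rlt_le_trans; [apply Hy, in_or_app; auto | first [apply Rmin_l | apply Rmin_r]]).
Qed.

Lemma open_union (Q : (E -> Prop) -> Prop) :
  is_open E (fun u => exists U, is_open E U /\ U u /\ Q U).
Proof.
  intros u [U [HU [Uu QU]]]. destruct (HU u Uu) as [F [eps [He Hb]]].
  exists F, eps. split; [exact He|]. intros y Hy. exists U; auto.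
Qed.

Lemma ball_open (x : E) i r : is_open E (fun y => snorm E i (vsub E y x) < r).
Proof.
  intros y Hy. exists (i :: nil), (r - snorm E i (vsub E y x)). split; [lra|].
  intros z Hz. assert (Hzy := Hz i (or_introl eq_refl)).
  assert (T := snorm_tri E i z y x). lra.
Qed.

Lemma far_open (x : E) i r : is_open E (fun y => r < snorm E i (vsub E y x)).
Proof.
  intros y Hy. exists (i :: nil), (snorm E i (vsub E y x) - r). split; [lra|].
  intros z Hz. assert (Hzy := Hz i (or_introl eq_refl)).
  assert (T := snorm_tri E i y z x). rewrite (snorm_sub_sym E i y z) in T. lra.
Qed.

Lemma compact_uniform_level (K : E -> Prop) (D : sidx E -> E -> R) :
  is_compact E K ->
  (forall x, K x -> exists i r U, 0 < r /\ is_open E U /\ U x /\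
                                  forall v, K v -> U v -> r < D i v) ->
  exists F eps, 0 < eps /\ forall v, K v -> exists i, In i F /\ eps < D i v.
Proof.
  intros HK Hloc.
  set (Q := fun (p : sidx E * R) U => 0 < snd p /\ forall v, K v -> U v -> snd p < D (fst p) v).
  destruct (HK _ (fun p u => exists U, is_open E U /\ U u /\ Q p U)) as [l Hl].
  - intro p. apply (open_union (Q p)).
  - intros x Kx. destruct (Hloc x Kx) as [i [r [U [Hr [HU [Ux HD]]]]]].
    exists (i, r), U. repeat split; auto.
  - destruct (list_pos_lower_bound snd l) as [eps [Heps Hle]].
    exists (map fst l), eps. split; [exact Heps|].
    intros v Kv. destruct (Hl v Kv) as [p [Hp [U [_ [Uv [Hr HD]]]]]].
    exists (fst p). split; [apply in_map, Hp|].
    specialize (Hle p Hp Hr). specialize (HD v Kv Uv). lra.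
Qed.

(* Compact sets are closed (the topology is Hausdorff). *)
Lemma compact_closed (A : E -> Prop) : is_compact E A -> closed A.
Proof.
  intros HA x Hx.
  destruct (compact_uniform_level A (fun i v => snorm E i (vsub E v x)) HA)
    as [F [eps [Heps Hfar]]].
  - intros y Ay. assert (Hyx : y <> x) by (intros ->; contradiction).
    destruct (snorm_separates E y x Hyx) as [i Hi].
    exists i, (snorm E i (vsub E y x) / 2), (fun v => snorm E i (vsub E y x) / 2 < snorm E i (vsub E v x)).
    repeat split; [lra | apply far_open | lra | auto].
  - exists F, eps. split; [exact Heps|]. intros z Hz Az.
    destruct (Hfar z Az) as [i [Hi Hlt]]. specialize (Hz i Hi). lra.
Qed.

Lemma closed_compact (K A : E -> Prop) :
  is_compact E K -> (forall x, A x -> K x) -> closed A -> is_compact E A.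
Proof.
  intros HK HAK HA J U HU Hcov.
  destruct (HK (option J) (fun o x => match o with Some j => U j x | None => ~ A x end))
    as [l Hl].
  - intros [j|]; [apply HU | exact HA].
  - intros x Kx. destruct (classic (A x)) as [Ax|nAx].
    + destruct (Hcov x Ax) as [j Hj]. exists (Some j); exact Hj.
    + exists None; exact nAx.
  - exists (flat_map (fun o => match o with Some j => j :: nil | None => nil end) l).
    intros x Ax. destruct (Hl x (HAK x Ax)) as [[j|] [Hin Hv]]; [|contradiction].
    exists j. split; [|exact Hv]. apply in_flat_map. exists (Some j). split; [exact Hin | left; reflexivity].
Qed.

Lemma image_compact (K A : E -> Prop) (f : E -> E) :
  is_compact E A -> (forall x, A x -> K x) -> continuous_on E K f ->
  is_compact E (fun y => exists a, A a /\ y = f a).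
Proof.
  intros HA HAK Hf J U HU Hcov.
  set (Q := fun j O => forall v, K v -> O v -> U j (f v)).
  destruct (HA J (fun j x => exists O, is_open E O /\ O x /\ Q j O)) as [l Hl].
  - intro j. apply (open_union (Q j)).
  - intros x Ax. destruct (Hcov (f x) (ex_intro _ x (conj Ax eq_refl))) as [j Hj].
    destruct (Hf x (HAK x Ax) (U j) (HU j) Hj) as [O [HO [Ox HOf]]].
    exists j, O. auto.
  - exists l. intros y [a [Aa ->]]. destruct (Hl a Aa) as [j [Hj [O [_ [Oa HO]]]]].
    exists j. split; [exact Hj | apply HO; auto].
Qed.

Lemma singleton_closed (a : E) : closed (fun y => y = a).
Proof.
  apply compact_closed. intros J U HU Hcov. destruct (Hcov a eq_refl) as [j Hj].
  exists (j :: nil). intros x ->. exists j. split; [left; reflexivity | exact Hj].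
Qed.

Lemma closed_family_inter (Ch : (E -> Prop) -> Prop) :
  (forall A, Ch A -> closed A) -> closed (fun x => forall A, Ch A -> A x).
Proof.
  intros Hcl x Hx. apply not_all_ex_not in Hx as [A HA]. apply imply_to_and in HA as [ChA nAx].
  destruct (Hcl A ChA x nAx) as [F [eps [He Hb]]].
  exists F, eps. split; [exact He|]. intros y Hy Hall. apply (Hb y Hy), Hall, ChA.
Qed.

Lemma chain_inter_nonempty (C : E -> Prop) (Ch : (E -> Prop) -> Prop) :
  is_compact E C -> (exists c, C c) ->
  (forall A, Ch A -> (exists x, A x) /\ closed A /\ forall x, A x -> C x) ->
  (forall A B, Ch A -> Ch B -> (forall x, A x -> B x) \/ (forall x, B x -> A x)) ->
  exists x, C x /\ forall A, Ch A -> A x.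
Proof.
  intros HC [c Cc] HCh Htot. apply NNPP. intro Hempty.
  destruct (HC (E -> Prop) (fun A x => Ch A /\ ~ A x)) as [l Hl].
  - intro A. destruct (classic (Ch A)) as [ChA|nChA].
    + apply (open_inter (fun _ => Ch A)); [|apply (HCh A ChA)].
      intros x _. exists nil, 1. split; [lra | auto].
    + intros x [ChA _]; contradiction.
  - intros x Cx. assert (Hn : ~ forall A, Ch A -> A x) by (intro; apply Hempty; eauto).
    apply not_all_ex_not in Hn as [A HA]. apply imply_to_and in HA. exists A; exact HA.
  - destruct (Hl c Cc) as [A0 [_ [ChA0 _]]].
    destruct (chain_list_min Ch (fun A B => forall x, A x -> B x) Htot)
      with (l := l) (m0 := A0) as [M [ChM HM]]; [firstorder | exact ChA0|].
    destruct (HCh M ChM) as [[x Mx] [_ HMC]].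
    destruct (Hl x (HMC x Mx)) as [A [Hin [ChA nAx]]]. apply nAx, (HM A Hin ChA), Mx.
Qed.

Lemma compact_bounded1 (K : E -> Prop) i :
  is_compact E K -> exists M, forall y, K y -> snorm E i y <= M.
Proof.
  intro HK. destruct (HK nat (fun k y => snorm E i y < INR k)) as [l Hl].
  - intros k y Hy. exists (i :: nil), (INR k - snorm E i y). split; [lra|].
    intros z Hz. assert (Hzy := Hz i (or_introl eq_refl)).
    assert (T := snorm_le_sub E i z y). lra.
  - intros y _. destruct (INR_unbounded (snorm E i y)) as [k Hk]. exists k; lra.
  - destruct (list_upper_bound INR l) as [M HM]. exists M.
    intros y Ky. destruct (Hl y Ky) as [k [Hk Hlt]]. specialize (HM k Hk). lra.
Qed.

Lemma compact_bounded (K : E -> Prop) (F : list (sidx E)) :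
  is_compact E K -> exists M, forall i y, In i F -> K y -> snorm E i y <= M.
Proof.
  intro HK. induction F as [|i F [M HM]]; [exists 0; intros i y []|].
  destruct (compact_bounded1 K i HK) as [Mi HMi].
  exists (Rmax Mi M). intros j y [<-|Hj] Ky.
  - eapply Rle_trans; [apply HMi, Ky | apply Rmax_l].
  - eapply Rle_trans; [apply HM; assumption | apply Rmax_r].
Qed.

End Topology.

Section FixedPoint.
Variables (E : LCTVS) (K : E -> Prop) (T : E -> E).
Hypothesis K_convex : is_convex E K.
Hypothesis T_maps : forall y, K y -> K (T y).
Hypothesis T_affine : affine_on E K T.

Fixpoint orbit_sum (x : E) (n : nat) : E :=
  match n with
  | O => x
  | S m => vadd E (orbit_sum x m) (Nat.iter (S m) T x)
  end.

Definition cesaro (x : E) (n : nat) : E := vscal E (/ (INR n + 1)) (orbit_sum x n).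

Lemma cesaro_weight n : 0 <= / (INR (S n) + 1) <= 1.
Proof.
  rewrite S_INR. assert (H := pos_INR n). split.
  - left. apply Rinv_0_lt_compat. lra.
  - rewrite <- Rinv_1. apply Rinv_le_contravar; lra.
Qed.

(* Each average is a convex combination of the next orbit point and the
   previous average; this is what convexity and affinity act upon. *)
Lemma cesaro_S (x : E) n :
  cesaro x (S n) = cvx E (/ (INR (S n) + 1)) (Nat.iter (S n) T x) (cesaro x n).
Proof.
  unfold cesaro, cvx. simpl orbit_sum.
  rewrite vscalA, vscalDr, vaddC. do 2 f_equal. rewrite S_INR.
  assert (H := pos_INR n). field. split; lra.
Qed.

Lemma cesaro_in (x : E) n : K x -> K (cesaro x n).
Proof.
  intro Kx. assert (Korb : forall k, K (Nat.iter k T x)) by (induction k; simpl; auto).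
  induction n as [|n IH].
  - unfold cesaro; simpl. replace (/ (0 + 1)) with 1 by field. rewrite vscal1. exact Kx.
  - rewrite cesaro_S. apply K_convex; auto. apply cesaro_weight.
Qed.

Lemma cesaro_map (x : E) n : K x -> T (cesaro x n) = cesaro (T x) n.
Proof.
  intro Kx. assert (Korb : forall k, K (Nat.iter k T x)) by (induction k; simpl; auto).
  induction n as [|n IH].
  - unfold cesaro; simpl. replace (/ (0 + 1)) with 1 by field. rewrite !vscal1. reflexivity.
  - rewrite !cesaro_S, T_affine, IH, <- Nat.iter_succ, Nat.iter_succ_r; auto.
    + apply cesaro_in, Kx.
    + apply cesaro_weight.
Qed.

(* The shifted orbit sum telescopes against the original one. *)
Lemma orbit_sum_shift (x : E) n :
  vsub E (orbit_sum (T x) n) (orbit_sum x n) = vsub E (Nat.iter (S n) T x) x.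
Proof.
  induction n as [|n IH]; [reflexivity|].
  simpl orbit_sum. rewrite vsub_addadd, IH, <- Nat.iter_succ_r, vaddC.
  symmetry. apply vsub_split.
Qed.

Lemma cesaro_displacement i (x : E) n : K x ->
  snorm E i (vsub E (T (cesaro x n)) (cesaro x n)) =
  / (INR n + 1) * snorm E i (vsub E (Nat.iter (S n) T x) x).
Proof.
  intro Kx. unfold cesaro at 2. rewrite cesaro_map; [|exact Kx]. unfold cesaro.
  rewrite <- vscal_sub, orbit_sum_shift, snorm_hom, Rabs_right; [reflexivity|].
  left. apply Rinv_0_lt_compat. assert (H := pos_INR n). lra.
Qed.

Lemma approx_fixed_point (x0 : E) (F : list (sidx E)) (eps : R) :
  K x0 -> is_compact E K -> 0 < eps ->
  exists y, K y /\ forall i, In i F -> snorm E i (vsub E (T y) y) < eps.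
Proof.
  intros Kx0 HK Heps.
  destruct (compact_bounded E K F HK) as [M HM].
  destruct (INR_archimed eps (2 * M) Heps) as [n Hn].
  assert (Hn1 : 0 < INR n + 1) by (assert (H := pos_INR n); lra).
  assert (Korb : forall k, K (Nat.iter k T x0)) by (induction k; simpl; auto).
  exists (cesaro x0 n). split; [apply cesaro_in, Kx0|]. intros i Hi.
  rewrite cesaro_displacement; [|exact Kx0].
  assert (Hd : snorm E i (vsub E (Nat.iter (S n) T x0) x0) <= 2 * M).
  { eapply Rle_trans; [apply snorm_sub_le|].
    assert (H1 := HM i _ Hi (Korb (S n))). assert (H2 := HM i _ Hi Kx0). lra. }
  apply (Rmult_lt_reg_l (INR n + 1)); [exact Hn1|].
  rewrite <- Rmult_assoc, Rinv_r, Rmult_1_l; [lra | lra].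
Qed.

Lemma moved_neighbourhood (y : E) :
  continuous_on E K T -> K y -> T y <> y ->
  exists i r U, 0 < r /\ is_open E U /\ U y /\
    forall v, K v -> U v -> r < snorm E i (vsub E (T v) v).
Proof.
  intros Hcont Ky Hmove. destruct (snorm_separates E (T y) y Hmove) as [i Hi].
  set (d := snorm E i (vsub E (T y) y)) in *.
  destruct (Hcont y Ky (fun w => snorm E i (vsub E w (T y)) < d / 4) (ball_open E _ _ _))
    as [U [HU [Uy HUT]]].
  { rewrite vsub_diag, snorm_zero. lra. }
  exists i, (d / 2), (fun v => U v /\ snorm E i (vsub E v y) < d / 4).
  split; [lra|]. split; [apply open_inter; [exact HU | apply ball_open]|].
  split; [split; [exact Uy|]; rewrite vsub_diag, snorm_zero; lra|].
  intros v Kv [Uv Hvy]. specialize (HUT v Kv Uv).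
  assert (T1 := snorm_tri E i (T y) (T v) y). assert (T2 := snorm_tri E i (T v) v y).
  rewrite (snorm_sub_sym E i (T y) (T v)) in T1. fold d in T1. lra.
Qed.

Theorem affine_fixed_point (x0 : E) :
  K x0 -> is_compact E K -> continuous_on E K T -> exists a, K a /\ T a = a.
Proof.
  intros Kx0 HK Hcont. apply NNPP. intro Hno.
  destruct (compact_uniform_level E K (fun i v => snorm E i (vsub E (T v) v)) HK)
    as [F [eps [Heps Hmoved]]].
  - intros y Ky. apply moved_neighbourhood; auto. intro Hfix. apply Hno; eauto.
  - destruct (approx_fixed_point x0 F eps Kx0 HK Heps) as [y [Ky Hy]].
    destruct (Hmoved y Ky) as [i [Hi Hlt]]. specialize (Hy i Hi). lra.
Qed.

End FixedPoint.

(* A compact semigroup whose right translations are continuous; no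
   convexity is needed for the idempotent theory. *)
Section RightTopologicalSemigroup.
Variables (E : LCTVS) (K : E -> Prop) (mul : E -> E -> E).
Hypothesis K_compact : is_compact E K.
Hypothesis mul_in : forall a b, K a -> K b -> K (mul a b).
Hypothesis mul_assoc : forall a b c, K a -> K b -> K c -> mul (mul a b) c = mul a (mul b c).
Hypothesis mul_right_cont : forall b, K b -> continuous_on E K (fun a => mul a b).

Definition closed_subsemigroup (A : E -> Prop) : Prop :=
  (exists x, A x) /\ closed E A /\ (forall x, A x -> K x) /\
  (forall x y, A x -> A y -> A (mul x y)).

Lemma K_closed_subsemigroup : (exists x, K x) -> closed_subsemigroup K.
Proof. intro Hne. repeat split; auto. apply compact_closed, K_compact. Qed.

(* Every closed subsemigroup contains a minimal one (Zorn, using Cantor's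
   intersection theorem to bound chains from below). *)
Lemma minimal_closed_subsemigroup (C : E -> Prop) : closed_subsemigroup C ->
  exists A, closed_subsemigroup A /\ (forall x, A x -> C x) /\
    forall B, closed_subsemigroup B -> (forall x, B x -> A x) -> forall x, A x -> B x.
Proof.
  intros HC.
  set (Sub := {A : E -> Prop | closed_subsemigroup A /\ forall x, A x -> C x}).
  destruct (zorn_preorder (exist _ C (conj HC (fun x Cx => Cx)) : Sub)
              (fun s t => forall x, proj1_sig t x -> proj1_sig s x)) as [[A [HA HAC]] Hmin].
  - auto.
  - auto.
  - intros Ch Htot.
    set (Fam := fun B => B = C \/ exists s, Ch s /\ B = proj1_sig s).
    set (I := fun x => forall B, Fam B -> B x).
    assert (HI : closed_subsemigroup I).
    { assert (HFam : forall B, Fam B -> closed_subsemigroup B /\ forall x, B x -> C x).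
      { intros B [->|[[B' HB'] [_ ->]]]; auto. }
      pose proof HC as [HCne [HCcl [HCK HCmul]]].
      repeat split.
      - destruct (chain_inter_nonempty E C Fam) as [x [_ Ix]]; [| | | |exists x; exact Ix]; auto.
        + apply (closed_compact E K); auto.
        + intros B HB. destruct (HFam B HB) as [[HBne [HBcl _]] HBC]. auto.
        + intros B B' [->|[s [Hs ->]]] [->|[t [Ht ->]]].
          * left; auto.
          * right. apply (proj2 (proj2_sig t)).
          * left. apply (proj2 (proj2_sig s)).
          * destruct (Htot s t Hs Ht); auto.
      - apply closed_family_inter. intros B HB. apply (HFam B HB).
      - intros x Ix. apply HCK, Ix. left; reflexivity.
      - intros x y Ix Iy B HB. destruct (HFam B HB) as [[_ [_ [_ HBmul]]] _].
        apply HBmul; [apply Ix | apply Iy]; exact HB. }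
    assert (HIC : forall x, I x -> C x) by (intros x Ix; apply Ix; left; reflexivity).
    exists (exist _ I (conj HI HIC)). intros s Hs x Ix. apply Ix. right; eauto.
  - exists A. split; [exact HA|]. split; [exact HAC|].
    intros B HB HBA. exact (Hmin (exist _ B (conj HB (fun x Bx => HAC x (HBA x Bx)))) HBA).
Qed.

Lemma left_ideal_closed_subsemigroup (A : E -> Prop) (a : E) :
  closed_subsemigroup A -> A a ->
  closed_subsemigroup (fun y => exists b, A b /\ y = mul b a).
Proof.
  intros [HAne [HAcl [HAK HAmul]]] Aa. repeat split.
  - exists (mul a a), a; auto.
  - apply compact_closed, (image_compact E K); auto.
    apply (closed_compact E K); auto.
  - intros y [b [Ab ->]]. auto.
  - intros x y [b [Ab ->]] [b' [Ab' ->]]. exists (mul (mul b a) b'). split; [auto|].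
    symmetry; apply mul_assoc; auto.
Qed.

Lemma stabilizer_closed_subsemigroup (A : E -> Prop) (a : E) :
  closed_subsemigroup A -> A a -> (exists b, A b /\ mul b a = a) ->
  closed_subsemigroup (fun b => A b /\ mul b a = a).
Proof.
  intros [HAne [HAcl [HAK HAmul]]] Aa Hne. split; [exact Hne | split; [| split]].
  - intros x Hx. destruct (classic (A x)) as [Ax|nAx].
    + assert (Hxa : mul x a <> a) by (intro; apply Hx; auto).
      destruct (mul_right_cont a (HAK a Aa) x (HAK x Ax) _ (singleton_closed E a) Hxa)
        as [U [HU [Ux HUf]]].
      destruct (HU x Ux) as [F [eps [He Hb]]]. exists F, eps. split; [exact He|].
      intros y Hy [Ay Hya]. exact (HUf y (HAK y Ay) (Hb y Hy) Hya).
    + destruct (HAcl x nAx) as [F [eps [He Hb]]]. exists F, eps. split; [exact He|].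
      intros y Hy [Ay _]. exact (Hb y Hy Ay).
  - intros x [Ax _]; auto.
  - intros x y [Ax Hx] [Ay Hy]. rewrite mul_assoc, Hy; auto.
Qed.

Lemma closed_subsemigroup_idempotent (C : E -> Prop) :
  closed_subsemigroup C -> exists f, C f /\ mul f f = f.
Proof.
  intro HC. destruct (minimal_closed_subsemigroup C HC) as [A [HA [HAC Hmin]]].
  pose proof HA as [[a Aa] _].
  assert (Hideal : exists b, A b /\ mul b a = a).
  { destruct (Hmin _ (left_ideal_closed_subsemigroup A a HA Aa)) with (x := a)
      as [b [Ab Hb]]; auto.
    - intros y [b [Ab ->]]. apply HA; auto.
    - exists b; auto. }
  destruct (Hmin _ (stabilizer_closed_subsemigroup A a HA Aa Hideal)) with (x := a)
    as [_ Haa]; [tauto | exact Aa |].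
  exists a. auto.
Qed.

(* If [e] is a minimal idempotent and [w e = w], then [e] lies in the left
   ideal [K w]: the idempotent [f] of [K w] yields the idempotent [e f <= e]. *)
Lemma minimal_idempotent_left_divides (e w : E) :
  minimal_idempotent E K mul e -> K w -> mul w e = w ->
  exists v, K v /\ mul v w = e.
Proof.
  intros [Ke [Hee Hmin]] Kw Hwe. unfold idempotent in Hee.
  destruct (closed_subsemigroup_idempotent _
              (left_ideal_closed_subsemigroup K w (K_closed_subsemigroup (ex_intro _ e Ke)) Kw))
    as [f [[u [Ku ->]] Hff]].
  set (f := mul u w) in *.
  assert (Kf : K f) by (unfold f; auto).
  assert (Hfe : mul f e = f) by (unfold f; rewrite mul_assoc, Hwe; auto).
  assert (Hg : mul e f = e).
  { apply NNPP. intro Hne. apply Hmin. exists (mul e f). repeat split; auto.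
    - unfold idempotent. rewrite mul_assoc, <- (mul_assoc f e f), Hfe, Hff; auto.
    - unfold idem_lt. rewrite mul_assoc, Hfe; auto.
    - unfold idem_lt. rewrite <- mul_assoc, Hee; auto. }
  exists (mul e u). split; [auto|]. rewrite mul_assoc; auto.
Qed.

End RightTopologicalSemigroup.

Theorem mainTheorem2 (E : LCTVS) (K : E -> Prop) (mul : E -> E -> E) (e : E) :
  compact_convex_semigroup E K mul ->
  minimal_idempotent E K mul e ->
  forall x, K x -> mul (mul e x) e = e.
Proof.
  intros [_ [Hconv [Hcomp [Hin [Hassoc Hright]]]]] Hmin x Kx.
  pose proof Hmin as [Ke [Hee _]]. unfold idempotent in Hee.
  set (z := mul (mul e x) e).
  assert (Kz : K z) by (unfold z; auto).
  assert (Hze : mul z e = z) by (unfold z; rewrite Hassoc, Hee; auto).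
  assert (Hez : mul e z = z) by (unfold z; rewrite <- !Hassoc, Hee; auto).
  destruct (affine_fixed_point E K (fun u => mul u z) Hconv (fun u Ku => Hin u z Ku Kz)
              (proj1 (Hright z Kz)) e Ke Hcomp (proj2 (Hright z Kz))) as [a [Ka Haz]].
  set (w := mul e a).
  assert (Kw : K w) by (unfold w; auto).
  assert (Hae : mul a e = a) by (rewrite <- Haz, Hassoc, Hze; auto).
  assert (Hwe : mul w e = w) by (unfold w; rewrite Hassoc, Hae; auto).
  assert (Hwz : mul w z = w) by (unfold w; rewrite Hassoc, Haz; auto).
  destruct (minimal_idempotent_left_divides E K mul Hcomp Hin Hassoc
              (fun b Kb => proj2 (Hright b Kb)) e w Hmin Kw Hwe)
    as [v [Kv Hvw]].
  rewrite <- Hez, <- Hvw, Hassoc, Hwz; auto.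
Qed.
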